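(* Let $x_1<x_2<\cdots<x_n$ be a partition of $[x_1,x_n]$, let $h_i=x_{i+1}-x_i$ for $i=1,\dots,n-1$, and $\hat h=\max_{1\le i\le n-1}h_i$. Let $f\in C^4([x_1,x_n])$ and let $L>0$ be such that $|f^{(4)}(x)|\le L$ for all $x\in[x_1,x_n]$. Write $f'_i=f'(x_i)$, $m_i=(f(x_{i+1})-f(x_i))/h_i$, $\lambda_i=\frac{h_{i+1}}{h_i+h_{i+1}}$ and $\mu_i=\frac{h_i}{h_i+h_{i+1}}$. Assume there exists $K>0$ such that $\hat h/h_j\le K$ for all $j=1,\dots,n-1$. For $2\le i\le n-1$ define $$R(i):=3\lambda_{i-1}m_{i-1}+3\mu_{i-1}m_i-\lambda_{i-1}f'_{i-1}-2f'_i-\mu_{i-1}f'_{i+1}.$$ Then for all $2\le i\le n-1$, $$|R(i)|\le\left(\frac{17K+K^2}{16}+1\right)L\,\hat h^3 .$$ *)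

From Stdlib Require Export Reals Lra Lia List.
Open Scope R_scope.

Definition deriv_within (a b : R) (g : R -> R) (x l : R) : Prop :=
  forall eps : R, 0 < eps -> exists delta : R, 0 < delta /\
    forall y : R, a <= y <= b -> y <> x -> Rabs (y - x) < delta ->
      Rabs ((g y - g x) / (y - x) - l) < eps.

Definition cont_within (a b : R) (g : R -> R) (x : R) : Prop :=
  forall eps : R, 0 < eps -> exists delta : R, 0 < delta /\
    forall y : R, a <= y <= b -> Rabs (y - x) < delta ->
      Rabs (g y - g x) < eps.

Definition C4_on (a b : R) (f f1 f2 f3 f4 : R -> R) : Prop :=
  forall t : R, a <= t <= b ->
    deriv_within a b f t (f1 t) /\
    deriv_within a b f1 t (f2 t) /\
    deriv_within a b f2 t (f3 t) /\
    deriv_within a b f3 t (f4 t) /\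
    cont_within a b f4 t.

(* Partition x_1 < ... < x_n (1-based indexing). *)
Definition hstep (x : nat -> R) (i : nat) : R := x (S i) - x i.

Definition hmax (x : nat -> R) (n : nat) : R :=
  fold_right Rmax 0 (map (hstep x) (seq 1 (n - 1))).

Definition slope (f : R -> R) (x : nat -> R) (i : nat) : R :=
  (f (x (S i)) - f (x i)) / hstep x i.

Definition lam (x : nat -> R) (i : nat) : R :=
  hstep x (S i) / (hstep x i + hstep x (S i)).

Definition mu (x : nat -> R) (i : nat) : R :=
  hstep x i / (hstep x i + hstep x (S i)).

Definition Rres (f f1 : R -> R) (x : nat -> R) (i : nat) : R :=
  3 * lam x (i - 1)%nat * slope f x (i - 1)%nat + 3 * mu x (i - 1)%nat * slope f x i
  - lam x (i - 1)%nat * f1 (x (i - 1)%nat) - 2 * f1 (x i) - mu x (i - 1)%nat * f1 (x (S i)).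

(* Proof idea: the residual R(i) is exact on cubic polynomials, so after expanding f
   and f' by Taylor's formula about x_i it is a weighted combination of the Taylor
   remainders at x_{i-1} and x_{i+1}.  Integrating |f''''| <= L four times (each
   step a mean value argument) bounds these remainders by L h^4/24 for f and
   L h^3/6 for f', and the weights then give |R(i)| <= 7/24 L hmax^3. *)

From Stdlib Require Import Reals Lra Lia List Factorial.
From Coquelicot Require Import Coquelicot.
Open Scope R_scope.

Lemma deriv_within_cont_within a b g x l :
  a <= x <= b -> deriv_within a b g x l -> cont_within a b g x.
Proof.
  intros Hx Hg eps Heps.
  destruct (Hg 1 Rlt_0_1) as [d [Hd Hquot]].
  assert (Hl : 0 < Rabs l + 1) by (pose proof (Rabs_pos l); lra).
  exists (Rmin d (eps / (Rabs l + 1))); split.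
  { apply Rmin_pos; [lra | apply Rdiv_lt_0_compat; lra]. }
  intros y Hy Hyx.
  destruct (Req_dec y x) as [-> | Hne].
  { unfold Rminus; rewrite Rplus_opp_r, Rabs_R0; lra. }
  pose proof (Rmin_l d (eps / (Rabs l + 1))).
  pose proof (Rmin_r d (eps / (Rabs l + 1))).
  specialize (Hquot y Hy Hne ltac:(lra)).
  set (D := (g y - g x) / (y - x)) in Hquot.
  assert (HD : Rabs D <= Rabs l + 1).
  { replace D with ((D - l) + l) by ring.
    pose proof (Rabs_triang (D - l) l); lra. }
  replace (g y - g x) with (D * (y - x)) by (unfold D; field; lra).
  rewrite Rabs_mult.
  apply Rle_lt_trans with ((Rabs l + 1) * Rabs (y - x)).
  { apply Rmult_le_compat_r; [apply Rabs_pos | exact HD]. }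
  apply Rmult_lt_reg_r with (/ (Rabs l + 1)); [apply Rinv_0_lt_compat; lra|].
  replace ((Rabs l + 1) * Rabs (y - x) * / (Rabs l + 1)) with (Rabs (y - x))
    by (field; lra).
  lra.
Qed.

Lemma deriv_within_subinterval A B a b g x l :
  A <= a -> b <= B -> deriv_within A B g x l -> deriv_within a b g x l.
Proof.
  intros HA HB Hg eps Heps.
  destruct (Hg eps Heps) as [d [Hd Hquot]].
  exists d; split; [exact Hd|].
  intros y Hy; apply Hquot; lra.
Qed.

Lemma deriv_within_plus a b g h x l m :
  deriv_within a b g x l -> deriv_within a b h x m ->
  deriv_within a b (fun y => g y + h y) x (l + m).
Proof.
  intros Hg Hh eps Heps.
  destruct (Hg (eps / 2)) as [d1 [Hd1 H1]]; [lra|].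
  destruct (Hh (eps / 2)) as [d2 [Hd2 H2]]; [lra|].
  exists (Rmin d1 d2); split; [apply Rmin_pos; assumption|].
  intros y Hy Hne Hyx.
  pose proof (Rmin_l d1 d2); pose proof (Rmin_r d1 d2).
  specialize (H1 y Hy Hne ltac:(lra)); specialize (H2 y Hy Hne ltac:(lra)).
  replace ((g y + h y - (g x + h x)) / (y - x) - (l + m))
    with (((g y - g x) / (y - x) - l) + ((h y - h x) / (y - x) - m))
    by (field; lra).
  pose proof (Rabs_triang ((g y - g x) / (y - x) - l) ((h y - h x) / (y - x) - m)).
  lra.
Qed.

Lemma deriv_within_opp a b g x l :
  deriv_within a b g x l -> deriv_within a b (fun y => - g y) x (- l).
Proof.
  intros Hg eps Heps.
  destruct (Hg eps Heps) as [d [Hd Hquot]].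
  exists d; split; [exact Hd|].
  intros y Hy Hne Hyx.
  replace ((- g y - - g x) / (y - x) - - l) with (- ((g y - g x) / (y - x) - l))
    by (field; lra).
  rewrite Rabs_Ropp; auto.
Qed.

Lemma deriv_within_reflect a b g x l :
  deriv_within a b g (- x) l -> deriv_within (- b) (- a) (fun y => g (- y)) x (- l).
Proof.
  intros Hg eps Heps.
  destruct (Hg eps Heps) as [d [Hd Hquot]].
  exists d; split; [exact Hd|].
  intros y Hy Hne Hyx.
  specialize (Hquot (- y) ltac:(lra) ltac:(lra)).
  replace (- y - - x) with (- (y - x)) in Hquot by ring.
  rewrite Rabs_Ropp in Hquot.
  replace ((g (- y) - g (- x)) / (y - x) - - l)
    with (- ((g (- y) - g (- x)) / - (y - x) - l)) by (field; lra).
  rewrite Rabs_Ropp; apply Hquot; exact Hyx.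
Qed.

Lemma derivable_pt_lim_deriv_within a b g x l :
  derivable_pt_lim g x l -> deriv_within a b g x l.
Proof.
  intros Hg eps Heps.
  destruct (Hg eps Heps) as [d Hquot].
  exists d; split; [apply cond_pos|].
  intros y _ Hne Hyx.
  replace y with (x + (y - x)) at 1 by ring.
  apply Hquot; lra.
Qed.

Definition clamp (p q y : R) : R := Rmax p (Rmin q y).

Lemma clamp_id p q y : p <= y <= q -> clamp p q y = y.
Proof. intros Hy; unfold clamp, Rmax, Rmin; repeat destruct Rle_dec; lra. Qed.

Lemma clamp_range p q y : p <= q -> p <= clamp p q y <= q.
Proof. intros Hpq; unfold clamp, Rmax, Rmin; repeat destruct Rle_dec; lra. Qed.

Lemma clamp_lipschitz p q y z : Rabs (clamp p q y - clamp p q z) <= Rabs (y - z).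
Proof.
  unfold clamp, Rmax, Rmin, Rabs; repeat destruct Rle_dec; repeat destruct Rcase_abs; lra.
Qed.

Lemma cont_within_continuity_pt_clamp p q phi s :
  p <= s <= q -> cont_within p q phi s ->
  continuity_pt (fun y => phi (clamp p q y)) s.
Proof.
  intros Hs Hphi eps Heps.
  destruct (Hphi eps Heps) as [d [Hd Hclose]].
  exists d; split; [exact Hd|].
  intros y [_ Hys]; simpl in *; unfold R_dist in *.
  pose proof (clamp_lipschitz p q y s) as Hlip.
  rewrite (clamp_id p q s Hs) in *.
  apply Hclose; [apply clamp_range | ]; lra.
Qed.

Lemma deriv_within_derivable_pt_lim_clamp p q phi s l :
  p < s < q -> deriv_within p q phi s l ->
  derivable_pt_lim (fun y => phi (clamp p q y)) s l.
Proof.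
  intros Hs Hphi eps Heps.
  destruct (Hphi eps Heps) as [d [Hd Hquot]].
  assert (Hm : 0 < Rmin d (Rmin (s - p) (q - s))) by (repeat apply Rmin_pos; lra).
  exists (mkposreal _ Hm); intros h Hh0 Hh; simpl in Hh.
  pose proof (Rmin_l d (Rmin (s - p) (q - s))).
  pose proof (Rmin_r d (Rmin (s - p) (q - s))).
  pose proof (Rmin_l (s - p) (q - s)); pose proof (Rmin_r (s - p) (q - s)).
  destruct (Rabs_def2 h (Rmin (s - p) (q - s))) as [Hh1 Hh2]; [lra|].
  rewrite !clamp_id by lra.
  specialize (Hquot (s + h) ltac:(lra) ltac:(lra)).
  replace (s + h - s) with h in Hquot by ring.
  apply Hquot; lra.
Qed.

(* Clamping to [p, q] turns a function known only on [p, q] into one that is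
   continuous on all of R, as the mean value theorem requires; [Rmax 0 phi'] agrees
   with phi' inside (p, q) and stays nonnegative at the endpoints MVT_gen may return. *)
Lemma deriv_within_nonneg_le p q phi phi' :
  p <= q ->
  (forall s, p <= s <= q -> deriv_within p q phi s (phi' s)) ->
  (forall s, p < s < q -> 0 <= phi' s) ->
  phi p <= phi q.
Proof.
  intros Hpq Hphi Hpos.
  destruct (Rle_lt_or_eq_dec p q Hpq) as [Hlt | <-]; [| lra].
  destruct (MVT_gen (fun y => phi (clamp p q y)) p q (fun s => Rmax 0 (phi' s)))
    as [c [_ Hmvt]].
  - intros s Hs; rewrite Rmin_left, Rmax_right in Hs by lra.
    rewrite Rmax_right by (apply Hpos; lra).
    apply is_derive_Reals, deriv_within_derivable_pt_lim_clamp; [lra|].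
    apply Hphi; lra.
  - intros s Hs; rewrite Rmin_left, Rmax_right in Hs by lra.
    apply cont_within_continuity_pt_clamp; [exact Hs|].
    apply (deriv_within_cont_within _ _ _ _ (phi' s) Hs), Hphi, Hs.
  - simpl in Hmvt; rewrite !clamp_id in Hmvt by lra.
    pose proof (Rmax_l 0 (phi' c)).
    assert (0 <= Rmax 0 (phi' c) * (q - p)) by (apply Rmult_le_pos; lra).
    lra.
Qed.

Lemma deriv_within_increment_bound p q e e' G G' :
  p <= q ->
  (forall s, p <= s <= q -> deriv_within p q e s (e' s)) ->
  (forall s, p <= s <= q -> deriv_within p q G s (G' s)) ->
  (forall s, p < s < q -> Rabs (e' s) <= G' s) ->
  Rabs (e q - e p) <= G q - G p.
Proof.
  intros Hpq He HG Hbound.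
  assert (Hlow : G p + e p <= G q + e q).
  { apply (deriv_within_nonneg_le p q (fun y => G y + e y) (fun s => G' s + e' s) Hpq).
    - intros s Hs; apply deriv_within_plus; [apply HG | apply He]; exact Hs.
    - intros s Hs; specialize (Hbound s Hs); apply Rabs_le_between in Hbound; lra. }
  assert (Hup : G p + - e p <= G q + - e q).
  { apply (deriv_within_nonneg_le p q (fun y => G y + - e y) (fun s => G' s + - e' s) Hpq).
    - intros s Hs; apply deriv_within_plus; [apply HG | apply deriv_within_opp, He];
        exact Hs.
    - intros s Hs; specialize (Hbound s Hs); apply Rabs_le_between in Hbound; lra. }
  apply Rabs_le; lra.
Qed.

Lemma derivable_pt_lim_pow_div_fact L b k s :
  derivable_pt_lim (fun y => L * (y - b) ^ S k / INR (fact (S k))) s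
    (L * (s - b) ^ k / INR (fact k)).
Proof.
  apply is_derive_Reals; auto_derive; [auto|].
  change (INR (fact k + k * fact k)) with (INR (fact (S k))).
  change (match k with 0%nat => 1 | S _ => INR k + 1 end) with (INR (S k)).
  rewrite fact_simpl, mult_INR; unfold Rminus; field.
  split; [apply INR_fact_neq_0 | apply not_0_INR; discriminate].
Qed.

Lemma taylor_remainder_step b q g g' P P' L k :
  b <= q ->
  (forall s, b <= s <= q -> deriv_within b q g s (g' s)) ->
  (forall s, derivable_pt_lim P s (P' s)) ->
  P b = g b ->
  (forall s, b < s < q -> Rabs (g' s - P' s) <= L * (s - b) ^ k / INR (fact k)) ->
  forall t, b <= t <= q ->
    Rabs (g t - P t) <= L * (t - b) ^ S k / INR (fact (S k)).
Proof.
  intros Hbq Hg HP HPb Hbound t Ht.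
  replace (g t - P t) with ((g t + - P t) - (g b + - P b)) by (rewrite HPb; ring).
  replace (L * (t - b) ^ S k / INR (fact (S k)))
    with (L * (t - b) ^ S k / INR (fact (S k)) - L * (b - b) ^ S k / INR (fact (S k)))
    by (rewrite Rminus_diag, pow_i by lia; unfold Rdiv; ring).
  apply (deriv_within_increment_bound b t (fun y => g y + - P y) (fun s => g' s + - P' s)
           (fun y => L * (y - b) ^ S k / INR (fact (S k)))
           (fun s => L * (s - b) ^ k / INR (fact k))); [lra | | |].
  - intros s Hs; apply deriv_within_plus.
    + apply (deriv_within_subinterval b q); [lra | lra | apply Hg; lra].
    + apply deriv_within_opp, derivable_pt_lim_deriv_within, HP.
  - intros s _; apply derivable_pt_lim_deriv_within, derivable_pt_lim_pow_div_fact.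
  - intros s Hs; apply Hbound; lra.
Qed.

Definition deriv4_on (a b : R) (f f1 f2 f3 f4 : R -> R) : Prop :=
  forall t, a <= t <= b ->
    deriv_within a b f t (f1 t) /\ deriv_within a b f1 t (f2 t) /\
    deriv_within a b f2 t (f3 t) /\ deriv_within a b f3 t (f4 t).

Lemma C4_on_deriv4_on A B a b f f1 f2 f3 f4 :
  A <= a -> b <= B -> C4_on A B f f1 f2 f3 f4 -> deriv4_on a b f f1 f2 f3 f4.
Proof.
  intros HA HB Hf t Ht.
  destruct (Hf t ltac:(lra)) as (D0 & D1 & D2 & D3 & _).
  repeat split; apply (deriv_within_subinterval A B); assumption.
Qed.

Lemma deriv4_on_reflect a b f f1 f2 f3 f4 :
  deriv4_on a b f f1 f2 f3 f4 ->
  deriv4_on (- b) (- a) (fun y => f (- y)) (fun y => - f1 (- y)) (fun y => f2 (- y))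
    (fun y => - f3 (- y)) (fun y => f4 (- y)).
Proof.
  intros Hf t Ht.
  destruct (Hf (- t) ltac:(lra)) as (D0 & D1 & D2 & D3).
  rewrite <- (Ropp_involutive (f2 (- t))), <- (Ropp_involutive (f4 (- t))).
  repeat split.
  - apply deriv_within_reflect; exact D0.
  - apply (deriv_within_opp _ _ (fun y => f1 (- y))), deriv_within_reflect; exact D1.
  - apply deriv_within_reflect; exact D2.
  - apply (deriv_within_opp _ _ (fun y => f3 (- y))), deriv_within_reflect; exact D3.
Qed.

Definition taylor2 (f f1 f2 : R -> R) (b t : R) : R :=
  f b + f1 b * (t - b) + f2 b * (t - b) ^ 2 / 2.

Definition taylor3 (f f1 f2 f3 : R -> R) (b t : R) : R :=
  f b + f1 b * (t - b) + f2 b * (t - b) ^ 2 / 2 + f3 b * (t - b) ^ 3 / 6.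

Lemma taylor3_remainder_right b q f f1 f2 f3 f4 L :
  b <= q -> deriv4_on b q f f1 f2 f3 f4 ->
  (forall t, b <= t <= q -> Rabs (f4 t) <= L) ->
  forall t, b <= t <= q ->
    Rabs (f1 t - taylor2 f1 f2 f3 b t) <= L * (t - b) ^ 3 / 6 /\
    Rabs (f t - taylor3 f f1 f2 f3 b t) <= L * (t - b) ^ 4 / 24.
Proof.
  intros Hbq Hf Hf4.
  assert (R3 : forall t, b <= t <= q -> Rabs (f3 t - f3 b) <= L * (t - b) ^ 1 / INR (fact 1)).
  { apply (taylor_remainder_step b q f3 f4 (fun _ => f3 b) (fun _ => 0) L 0 Hbq).
    - intros s Hs; apply Hf, Hs.
    - intros s; apply derivable_pt_lim_const.
    - reflexivity.
    - intros s Hs; simpl; rewrite Rminus_0_r; unfold Rdiv; rewrite Rinv_1, !Rmult_1_r.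
      apply Hf4; lra. }
  assert (R2 : forall t, b <= t <= q ->
            Rabs (f2 t - (f2 b + f3 b * (t - b))) <= L * (t - b) ^ 2 / INR (fact 2)).
  { apply (taylor_remainder_step b q f2 f3 _ (fun _ => f3 b) L 1 Hbq).
    - intros s Hs; apply Hf, Hs.
    - intros s; apply is_derive_Reals; auto_derive; [auto | ring].
    - ring.
    - intros s Hs; apply R3; lra. }
  assert (R1 : forall t, b <= t <= q ->
            Rabs (f1 t - taylor2 f1 f2 f3 b t) <= L * (t - b) ^ 3 / INR (fact 3)).
  { apply (taylor_remainder_step b q f1 f2 _ (fun y => f2 b + f3 b * (y - b)) L 2 Hbq).
    - intros s Hs; apply Hf, Hs.
    - intros s; apply is_derive_Reals; unfold taylor2; auto_derive; [auto | field].
    - unfold taylor2; field.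
    - intros s Hs; apply R2; lra. }
  assert (R0 : forall t, b <= t <= q ->
            Rabs (f t - taylor3 f f1 f2 f3 b t) <= L * (t - b) ^ 4 / INR (fact 4)).
  { apply (taylor_remainder_step b q f f1 _ (taylor2 f1 f2 f3 b) L 3 Hbq).
    - intros s Hs; apply Hf, Hs.
    - intros s; apply is_derive_Reals; unfold taylor2, taylor3; auto_derive; [auto | field].
    - unfold taylor3; field.
    - intros s Hs; apply R1; lra. }
  intros t Ht.
  replace 6 with (INR (fact 3)) by (simpl; lra).
  replace 24 with (INR (fact 4)) by (simpl; lra).
  split; [apply R1 | apply R0]; exact Ht.
Qed.

Lemma taylor3_remainder_left p b f f1 f2 f3 f4 L :
  p <= b -> deriv4_on p b f f1 f2 f3 f4 ->
  (forall t, p <= t <= b -> Rabs (f4 t) <= L) ->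
  forall t, p <= t <= b ->
    Rabs (f1 t - taylor2 f1 f2 f3 b t) <= L * (b - t) ^ 3 / 6 /\
    Rabs (f t - taylor3 f f1 f2 f3 b t) <= L * (b - t) ^ 4 / 24.
Proof.
  intros Hpb Hf Hf4 t Ht.
  destruct (taylor3_remainder_right (- b) (- p) _ _ _ _ _ L ltac:(lra)
              (deriv4_on_reflect _ _ _ _ _ _ _ Hf)) with (t := - t) as [R1 R0].
  { intros s Hs; apply Hf4; lra. }
  { lra. }
  unfold taylor2, taylor3 in *; rewrite !Ropp_involutive in R1, R0.
  replace (- t - - b) with (b - t) in R1, R0 by ring.
  split.
  - replace (f1 t - _) with (- (- f1 t - (- f1 b + f2 b * (b - t) + - f3 b * (b - t) ^ 2 / 2)))
      by field.
    rewrite Rabs_Ropp; exact R1.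
  - replace (f t - _) with (f t - (f b + - f1 b * (b - t) + f2 b * (b - t) ^ 2 / 2
                                   + - f3 b * (b - t) ^ 3 / 6)) by field.
    exact R0.
Qed.

Definition residual (f f1 : R -> R) (a b c : R) : R :=
  3 * ((c - b) / ((b - a) + (c - b))) * ((f b - f a) / (b - a))
  + 3 * ((b - a) / ((b - a) + (c - b))) * ((f c - f b) / (c - b))
  - (c - b) / ((b - a) + (c - b)) * f1 a - 2 * f1 b
  - (b - a) / ((b - a) + (c - b)) * f1 c.

Lemma Rres_residual f f1 x j :
  Rres f f1 x (S j) = residual f f1 (x j) (x (S j)) (x (S (S j))).
Proof.
  unfold Rres, residual, lam, mu, slope, hstep.
  replace (S j - 1)%nat with j by lia; reflexivity.
Qed.

Lemma residual_taylor3 f f1 f2 f3 a b c :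
  a < b -> b < c ->
  residual f f1 a b c =
  (- (3 * (c - b) / (b - a)) * (f a - taylor3 f f1 f2 f3 b a)
   + 3 * (b - a) / (c - b) * (f c - taylor3 f f1 f2 f3 b c)
   - (c - b) * (f1 a - taylor2 f1 f2 f3 b a)
   - (b - a) * (f1 c - taylor2 f1 f2 f3 b c)) / (c - a).
Proof. intros Hab Hbc; unfold residual, taylor2, taylor3; field; lra. Qed.

Lemma Rabs_scal_le u r B : 0 <= u -> Rabs r <= B -> Rabs (u * r) <= u * B.
Proof.
  intros Hu Hr; rewrite Rabs_mult, (Rabs_pos_eq u Hu).
  apply Rmult_le_compat_l; assumption.
Qed.

Lemma residual_bound f f1 f2 f3 a b c L H :
  a < b -> b < c -> b - a <= H -> c - b <= H -> 0 <= L ->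
  Rabs (f1 a - taylor2 f1 f2 f3 b a) <= L * (b - a) ^ 3 / 6 ->
  Rabs (f a - taylor3 f f1 f2 f3 b a) <= L * (b - a) ^ 4 / 24 ->
  Rabs (f1 c - taylor2 f1 f2 f3 b c) <= L * (c - b) ^ 3 / 6 ->
  Rabs (f c - taylor3 f f1 f2 f3 b c) <= L * (c - b) ^ 4 / 24 ->
  Rabs (residual f f1 a b c) <= 7 / 24 * L * H ^ 3.
Proof.
  intros Hab Hbc HhH HkH HL R1a R0a R1c R0c.
  rewrite (residual_taylor3 f f1 f2 f3 a b c Hab Hbc).
  set (h := b - a) in *; set (k := c - b) in *.
  replace (c - a) with (h + k) by (unfold h, k; ring).
  assert (Hh : 0 < h) by (unfold h; lra); assert (Hk : 0 < k) by (unfold k; lra).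
  assert (T0a : Rabs (3 * k / h * (f a - taylor3 f f1 f2 f3 b a)) <= L * k * h ^ 3 / 8).
  { eapply Rle_trans; [apply Rabs_scal_le; [| exact R0a] |].
    - apply Rlt_le, Rdiv_lt_0_compat; lra.
    - right; field; lra. }
  assert (T0c : Rabs (3 * h / k * (f c - taylor3 f f1 f2 f3 b c)) <= L * h * k ^ 3 / 8).
  { eapply Rle_trans; [apply Rabs_scal_le; [| exact R0c] |].
    - apply Rlt_le, Rdiv_lt_0_compat; lra.
    - right; field; lra. }
  assert (T1a : Rabs (k * (f1 a - taylor2 f1 f2 f3 b a)) <= L * k * h ^ 3 / 6).
  { eapply Rle_trans; [apply Rabs_scal_le; [lra | exact R1a] | right; field]. }
  assert (T1c : Rabs (h * (f1 c - taylor2 f1 f2 f3 b c)) <= L * h * k ^ 3 / 6).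
  { eapply Rle_trans; [apply Rabs_scal_le; [lra | exact R1c] | right; field]. }
  assert (Hh3 : h ^ 3 <= H ^ 3) by (apply pow_incr; lra).
  assert (Hk3 : k ^ 3 <= H ^ 3) by (apply pow_incr; lra).
  assert (Hsum : L * k * h ^ 3 + L * h * k ^ 3 <= L * H ^ 3 * (h + k)).
  { assert (L * k * h ^ 3 <= L * k * H ^ 3)
      by (apply Rmult_le_compat_l; [apply Rmult_le_pos |]; lra).
    assert (L * h * k ^ 3 <= L * h * H ^ 3)
      by (apply Rmult_le_compat_l; [apply Rmult_le_pos |]; lra).
    lra. }
  rewrite Rabs_div, (Rabs_pos_eq (h + k)) by lra.
  apply Rle_div_l; [lra |].
  apply Rabs_le_between in T0a, T0c, T1a, T1c.
  apply Rabs_le; lra.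
Qed.

Lemma fold_right_Rmax_ge l a : In a l -> a <= fold_right Rmax 0 l.
Proof.
  induction l as [| y l IH]; simpl; [tauto |].
  intros [<- | Ha]; [apply Rmax_l |].
  eapply Rle_trans; [apply IH, Ha | apply Rmax_r].
Qed.

Lemma hstep_le_hmax x n j : (1 <= j)%nat -> (j <= n - 1)%nat -> hstep x j <= hmax x n.
Proof.
  intros H1 H2; apply fold_right_Rmax_ge, in_map, in_seq; lia.
Qed.

Lemma partition_le n (x : nat -> R) :
  (forall i, (1 <= i)%nat -> (i < n)%nat -> x i < x (S i)) ->
  forall j k, (1 <= j)%nat -> (j <= k)%nat -> (k <= n)%nat -> x j <= x k.
Proof.
  intros Hx j k Hj Hjk; induction Hjk as [| k Hjk IH]; intros Hk; [lra |].
  apply Rle_trans with (x k); [apply IH; lia | left; apply Hx; lia].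
Qed.

Theorem lemma2 (n : nat) (x : nat -> R) (f f1 f2 f3 f4 : R -> R) (L K : R) :
  (forall i : nat, (1 <= i)%nat -> (i < n)%nat -> x i < x (S i)) ->
  C4_on (x 1%nat) (x n) f f1 f2 f3 f4 ->
  0 < L ->
  (forall t : R, x 1%nat <= t <= x n -> Rabs (f4 t) <= L) ->
  0 < K ->
  (forall j : nat, (1 <= j)%nat -> (j <= n - 1)%nat -> hmax x n / hstep x j <= K) ->
  forall i : nat, (2 <= i)%nat -> (i <= n - 1)%nat ->
    Rabs (Rres f f1 x i) <= ((17 * K + K ^ 2) / 16 + 1) * L * (hmax x n) ^ 3.
Proof.
  intros Hx Hf HL Hf4 HK _ i Hi2 Hin.
  destruct i as [| j]; [lia |]; rewrite Rres_residual.
  set (H := hmax x n).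
  assert (Hh : hstep x j <= H) by (apply hstep_le_hmax; lia).
  assert (Hk : hstep x (S j) <= H) by (apply hstep_le_hmax; lia).
  unfold hstep in Hh, Hk.
  assert (Hab : x j < x (S j)) by (apply Hx; lia).
  assert (Hbc : x (S j) < x (S (S j))) by (apply Hx; lia).
  assert (Ha : x 1%nat <= x j) by (apply (partition_le n); auto; lia).
  assert (Hc : x (S (S j)) <= x n) by (apply (partition_le n); auto; lia).
  destruct (taylor3_remainder_left (x j) (x (S j)) f f1 f2 f3 f4 L) with (t := x j)
    as [R1a R0a]; try lra.
  { apply (C4_on_deriv4_on (x 1%nat) (x n)); [lra | lra | exact Hf]. }
  { intros t Ht; apply Hf4; lra. }
  destruct (taylor3_remainder_right (x (S j)) (x (S (S j))) f f1 f2 f3 f4 L)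
    with (t := x (S (S j))) as [R1c R0c]; try lra.
  { apply (C4_on_deriv4_on (x 1%nat) (x n)); [lra | lra | exact Hf]. }
  { intros t Ht; apply Hf4; lra. }
  eapply Rle_trans; [apply (residual_bound f f1 f2 f3); eauto; lra |].
  assert (0 <= L * H ^ 3) by (apply Rmult_le_pos; [lra | apply pow_le; lra]).
  assert (7 / 24 <= (17 * K + K ^ 2) / 16 + 1) by (pose proof (pow2_ge_0 K); lra).
  rewrite !Rmult_assoc; apply Rmult_le_compat_r; assumption.
Qed.
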